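(* Let $f:\mathbb{R}^n\times\mathbb{R}^m\to\mathbb{R}$ and $g:\mathbb{R}^n\times\mathbb{R}^m\to\mathbb{R}^p$ be continuous. Assume that for every $x\in\mathbb{R}^n$, $f(x,\cdot)$ is strictly convex, $g(x,\cdot)$ is convex (componentwise), and the problem $\min_{u\in\mathbb{R}^m} f(x,u)$ subject to $g(x,u)\le 0$ has at least one minimizer; let $u^*(x)$ denote the (unique) minimizer. Assume moreover that local compact feasibility holds at every $x\in\mathbb{R}^n$. Then $u^*:\mathbb{R}^n\to\mathbb{R}^m$ is measurable (with respect to the Borel $\sigma$-algebras).
   Context: Local compact feasibility (LCF) holds at $x\in\mathbb{R}^n$ if there exist a compact set $K\subset\mathbb{R}^m$ and $\delta>0$ such that for all $y\in\mathbb{R}^n$ with $\|y-x\|<\delta$ there exists $u\in K$ with $g(y,u)\le 0$. *)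

From HB Require Import structures.
From mathcomp Require Import all_boot all_order all_algebra.
From mathcomp Require Import all_classical all_reals all_analysis.
Set Implicit Arguments. Unset Strict Implicit. Unset Printing Implicit Defensive.
Import Order.TTheory GRing.Theory Num.Theory.
Import numFieldNormedType.Exports.
Local Open Scope classical_set_scope.
Local Open Scope ring_scope.

Definition borel_sets (T : topologicalType) : set (set T) := <<s open >>.

Definition borel_measurable (T U : topologicalType) (h : T -> U) : Prop :=
  forall B : set U, borel_sets B -> borel_sets (h @^-1` B).

Definition strictly_convex_in_u (R : realType) (n m : nat)
  (f : 'rV[R]_n * 'rV[R]_m -> R) : Prop :=
  forall (x : 'rV[R]_n) (u v : 'rV[R]_m) (t : R), u != v -> 0 < t -> t < 1 ->
    f (x, t *: u + (1 - t) *: v) < t * f (x, u) + (1 - t) * f (x, v).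

Definition convex_in_u (R : realType) (n m p : nat)
  (g : 'rV[R]_n * 'rV[R]_m -> 'rV[R]_p) : Prop :=
  forall (i : 'I_p) (x : 'rV[R]_n) (u v : 'rV[R]_m) (t : R), 0 <= t -> t <= 1 ->
    g (x, t *: u + (1 - t) *: v) ord0 i
      <= t * g (x, u) ord0 i + (1 - t) * g (x, v) ord0 i.

Definition feasible (R : realType) (n m p : nat)
  (g : 'rV[R]_n * 'rV[R]_m -> 'rV[R]_p) (x : 'rV[R]_n) (u : 'rV[R]_m) : Prop :=
  forall i : 'I_p, g (x, u) ord0 i <= 0.

Definition is_minimizer (R : realType) (n m p : nat)
  (f : 'rV[R]_n * 'rV[R]_m -> R) (g : 'rV[R]_n * 'rV[R]_m -> 'rV[R]_p)
  (x : 'rV[R]_n) (u : 'rV[R]_m) : Prop :=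
  feasible g x u /\ forall v : 'rV[R]_m, feasible g x v -> f (x, u) <= f (x, v).

Definition LCF (R : realType) (n m p : nat)
  (g : 'rV[R]_n * 'rV[R]_m -> 'rV[R]_p) (x : 'rV[R]_n) : Prop :=
  exists (K : set 'rV[R]_m) (delta : R), compact K /\ 0 < delta /\
    forall y : 'rV[R]_n, `|y - x| < delta -> exists2 u, K u & feasible g y u.

(* Let V x := f (x, u* x) be the optimal value.  For compact K the set of x
   admitting a feasible u in K with f (x, u) <= c is a countable union of
   projections of compact sets, hence Borel; exhausting R^m by closed balls then
   makes every sublevel set of V Borel.  For compact K, u* x lies in K iff for
   every k some feasible u in K is 1/(k+1)-optimal at x: a limit of such u is a
   minimizer in K, and minimizers are unique by strict convexity.  The sets of
   such x are countable unions over rational thresholds of the sets above, so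
   preimages of compact, hence closed, hence open sets are Borel. *)
From HB Require Import structures.
From mathcomp Require Import all_boot all_order all_algebra.
From mathcomp Require Import all_classical all_reals all_analysis.
From mathcomp Require Import lra.
Import Order.TTheory GRing.Theory Num.Theory.
Import numFieldNormedType.Exports.
Local Open Scope classical_set_scope.
Local Open Scope ring_scope.

Local Notation borel_type T := (g_sigma_algebraType (@open T)).

Lemma closed_borel_measurable (T : ptopologicalType) (A : set T) :
  closed A -> @measurable _ (borel_type T) A.
Proof.
move=> cA; rewrite -[A]setCK; apply: measurableC.
by apply: sub_sigma_algebra; rewrite /= -closedC setCK.
Qed.

Lemma open_preimage_borel_measurable (T U : ptopologicalType) (h : T -> U) :
  (forall D, open D -> @measurable _ (borel_type T) (h @^-1` D)) ->
  borel_measurable h.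
Proof.
move=> hD B mB.
have mh : measurable_fun (setT : set (borel_type T)) (h : _ -> borel_type U).
  apply: measurability => //.
  by move=> _ [D oD <-]; rewrite setTI; exact: hD.
by have := mh measurableT B mB; rewrite setTI.
Qed.

Lemma natSinv_lt {R : archiRealFieldType} (e : R) :
  0 < e -> exists k : nat, k.+1%:R^-1 < e.
Proof.
move=> e0; exists (Num.truncn e^-1).
by rewrite invf_plt ?posrE ?invr_gt0 //; exact: truncnS_gt.
Qed.

Lemma ler_add_natSinv {R : archiRealFieldType} (a b : R) :
  (forall k : nat, a <= b + k.+1%:R^-1) -> a <= b.
Proof.
move=> hab; rewrite leNgt; apply/negP => ba.
have [k hk] : exists k : nat, k.+1%:R^-1 < a - b by apply: natSinv_lt; rewrite subr_gt0.
by move: (hab k) hk; set t := k.+1%:R^-1; lra.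
Qed.

Lemma compact_norm_le (R : realType) (q : nat) (r : R) :
  compact [set v : 'rV[R]_q | `|v| <= r].
Proof.
apply: bounded_closed_compact.
  exists r; split; first exact: num_real.
  by move=> M rM v /= vr; apply: (le_trans vr); exact: ltW.
have -> : [set v : 'rV[R]_q | `|v| <= r] = (fun v => `|v|) @^-1` [set s | s <= r] by [].
apply: preimage_closed; last exact: closed_le.
by move=> v _; exact: norm_continuous.
Qed.

Section minimizers.
Variables (R : realType) (n m p : nat).
Variables (f : 'rV[R]_n * 'rV[R]_m -> R) (g : 'rV[R]_n * 'rV[R]_m -> 'rV[R]_p).

Lemma is_minimizer_unique {x u v} :
  strictly_convex_in_u f -> convex_in_u g ->
  is_minimizer f g x u -> is_minimizer f g x v -> u = v.
Proof.
move=> sc cg [fu mu] [fv mv]; apply/eqP; apply/negPn/negP => uv.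
set t : R := 2^-1.
have t0 : 0 < t by rewrite invr_gt0.
have t1 : t < 1 by rewrite invf_lt1 // ltr1n.
set w := t *: u + (1 - t) *: v.
have fw : feasible g x w.
  move=> i; apply: le_trans (cg i x u v t (ltW t0) (ltW t1)) _.
  by have := fu i; have := fv i; nra.
by have := sc x u v t uv t0 t1; have := mu w fw; have := mv w fw; nra.
Qed.

Hypotheses (fc : continuous f) (gc : continuous g).

Local Notation borel A := (@measurable _ (borel_type 'rV[R]_n) A).

Definition feasible_sublevel (c : R) : set ('rV[R]_n * 'rV[R]_m) :=
  [set z | feasible g z.1 z.2 /\ f z <= c].

Lemma closed_feasible_sublevel c : closed (feasible_sublevel c).
Proof.
have -> : feasible_sublevel c =
    (\bigcap_(i in setT) ((fun z => g z ord0 i) @^-1` [set r | r <= 0]))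
    `&` (f @^-1` [set r | r <= c]).
  by apply/seteqP; split => -[x u] /= [gz fz]; split => // i; [move=> _|]; exact: gz.
apply: closedI.
  apply: closed_bigI => i _; apply: preimage_closed; last exact: closed_le.
  move=> z _.
  exact: (@continuous_comp _ _ _ g (fun M : 'rV[R]_p => M ord0 i) z (gc z)
    (@coord_continuous _ _ _ _ _ (g z))).
by apply: preimage_closed; [move=> z _; exact: fc | exact: closed_le].
Qed.

Definition sublevel_within (K : set 'rV[R]_m) (c : R) : set 'rV[R]_n :=
  [set x | exists2 u, K u & feasible g x u /\ f (x, u) <= c].

Lemma measurable_sublevel_within K c : compact K -> borel (sublevel_within K c).
Proof.
move=> cK.
have -> : sublevel_within K c =
    \bigcup_k (fst @` (([set x | `|x| <= k%:R] `*` K) `&` feasible_sublevel c)).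
  apply/seteqP; split => [x [u Ku fxu] | x [k _ [[y u] [[/= _ Ku] fxu] /= <-]]].
    by exists (Num.truncn `|x|).+1 => //; exists (x, u) => //; split => //=;
      split => //; exact/ltW/truncnS_gt.
  by exists u.
apply: bigcupT_measurable => k; apply: closed_borel_measurable.
apply: compact_closed; first exact: norm_hausdorff.
apply: continuous_compact; first by apply: continuous_subspaceT => z; exact: cvg_fst.
apply: compact_closedI; last exact: closed_feasible_sublevel.
by apply: compact_setX => //; exact: compact_norm_le.
Qed.

Lemma bigcap_sublevel_within K c : compact K ->
  \bigcap_k sublevel_within K (c + k.+1%:R^-1) = sublevel_within K c.
Proof.
move=> cK; apply/seteqP; split => x; last first.
  move=> [u Ku [gxu fxu]] k _; exists u => //; split => //.
  by apply: (le_trans fxu); rewrite lerDl invr_ge0.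
move=> near_c.
set S := ([set x] `*` K) `&` feasible_sublevel (c + 1).
have inS k : exists2 u, S (x, u) & f (x, u) <= c + k.+1%:R^-1.
  have [u Ku [gxu fxu]] := near_c k I.
  exists u => //; split => //; split => //=; apply: (le_trans fxu).
  by rewrite lerD2l invf_le1 // ?ler1n // ltr0Sn.
have S0 : S !=set0 by have [u Su _] := inS 0%N; exists (x, u).
have cS : compact S.
  apply: compact_closedI; last exact: closed_feasible_sublevel.
  by apply: compact_setX => //; exact: compact_set1.
have [[y u] Syu u_min] := compact_EVT_min S0 cS (continuous_subspaceT fc).
move: Syu u_min; rewrite inE => -[[/= -> Ku] [gxu _]] u_min.
exists u => //; split => //; apply: ler_add_natSinv => k.
have [w Sw fxw] := inS k.
by apply: le_trans fxw; apply: u_min; rewrite inE.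
Qed.

Variable ustar : 'rV[R]_n -> 'rV[R]_m.
Hypothesis ustar_min : forall x, is_minimizer f g x (ustar x).

Definition optimal_value x := f (x, ustar x).

Lemma measurable_optimal_value_lt r : borel [set x | optimal_value x < r].
Proof.
have -> : [set x | optimal_value x < r] =
    \bigcup_k \bigcup_j sublevel_within [set u | `|u| <= k%:R] (r - j.+1%:R^-1).
  apply/seteqP; split => x /=.
    move=> Vr; have [j hj] : exists j : nat, j.+1%:R^-1 < r - optimal_value x.
      by apply: natSinv_lt; rewrite subr_gt0.
    exists (Num.truncn `|ustar x|).+1 => //; exists j => //; exists (ustar x).
      exact/ltW/truncnS_gt.
    split; first exact: (ustar_min x).1.
    by move: hj; rewrite /optimal_value; set t := j.+1%:R^-1; lra.
  move=> [k _ [j _ [u _ [gxu fxu]]]].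
  have := (ustar_min x).2 u gxu; have : 0 < j.+1%:R^-1 :> R by rewrite invr_gt0.
  by move: fxu; rewrite /optimal_value; set t := j.+1%:R^-1; lra.
apply: bigcupT_measurable => k; apply: bigcupT_measurable => j.
by apply: measurable_sublevel_within; exact: compact_norm_le.
Qed.

Lemma measurable_optimal_value_le c : borel [set x | optimal_value x <= c].
Proof.
have -> : [set x | optimal_value x <= c] =
    \bigcap_k [set x | optimal_value x < c + k.+1%:R^-1].
  apply/seteqP; split => x /=.
    by move=> Vc k _; rewrite /= ltr_pwDr // invr_gt0.
  by move=> Vc; apply: ler_add_natSinv => k; exact/ltW/(Vc k I).
by apply: bigcapT_measurable => k; exact: measurable_optimal_value_lt.
Qed.

Definition near_optimal_within (K : set 'rV[R]_m) (e : R) : set 'rV[R]_n :=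
  [set x | exists2 u, K u & feasible g x u /\ f (x, u) < optimal_value x + e].

(* A rational threshold q separates f (x, u) from optimal_value x + e. *)
Lemma measurable_near_optimal_within K e :
  compact K -> borel (near_optimal_within K e).
Proof.
move=> cK.
have -> : near_optimal_within K e =
    \bigcup_(q : rat) (sublevel_within K (ratr q)
                       `&` ~` [set x | optimal_value x <= ratr q - e]).
  apply/seteqP; split => x /=.
    move=> [u Ku [gxu fxu]]; have [q] := rat_in_itvoo fxu.
    rewrite in_itv /= => /andP[q1 q2]; exists q => //; split.
      by exists u => //; split => //; exact: ltW.
    by move=> /= Vq; lra.
  move=> [q _ [[u Ku [gxu fxu]] /negP]]; rewrite -ltNge => Vq.
  by exists u => //; split => //; lra.
apply: bigcupT_measurable_rat => q; apply: measurableI.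
  exact: measurable_sublevel_within.
by apply: measurableC; exact: measurable_optimal_value_le.
Qed.

Hypotheses (sc : strictly_convex_in_u f) (cg : convex_in_u g).

Lemma preimage_compact_near_optimal K : compact K ->
  ustar @^-1` K = \bigcap_k near_optimal_within K k.+1%:R^-1.
Proof.
move=> cK; apply/seteqP; split => x.
  move=> Ku k _; exists (ustar x) => //; split; first exact: (ustar_min x).1.
  by rewrite ltr_pwDr // invr_gt0.
move=> near_opt.
have : sublevel_within K (optimal_value x) x.
  rewrite -bigcap_sublevel_within // => k _.
  by have [u Ku [gxu fxu]] := near_opt k I; exists u => //; split => //; exact: ltW.
move=> [u Ku [gxu fxu]].
have u_min : is_minimizer f g x u.
  by split => // v gxv; apply: le_trans fxu _; exact: (ustar_min x).2.
by rewrite /preimage /= (is_minimizer_unique sc cg (ustar_min x) u_min).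
Qed.

Lemma measurable_preimage_closed F : closed F -> borel (ustar @^-1` F).
Proof.
move=> cF.
have -> : ustar @^-1` F = \bigcup_k ustar @^-1` ([set u | `|u| <= k%:R] `&` F).
  apply/seteqP; split => [x Fx | x [k _ [_ Fx]] //].
  by exists (Num.truncn `|ustar x|).+1 => //; split => //; exact/ltW/truncnS_gt.
apply: bigcupT_measurable => k.
have cFk : compact ([set u | `|u| <= k%:R] `&` F).
  by apply: compact_closedI => //; exact: compact_norm_le.
rewrite preimage_compact_near_optimal //.
by apply: bigcapT_measurable => j; exact: measurable_near_optimal_within.
Qed.

Lemma minimizer_borel_measurable : borel_measurable ustar.
Proof.
apply: open_preimage_borel_measurable => D oD.
rewrite -[D]setCK -preimage_setC; apply: measurableC.
by apply: measurable_preimage_closed; exact: open_closedC.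
Qed.

End minimizers.

Theorem proposition3p8 (R : realType) (n m p : nat)
  (f : 'rV[R]_n * 'rV[R]_m -> R) (g : 'rV[R]_n * 'rV[R]_m -> 'rV[R]_p)
  (ustar : 'rV[R]_n -> 'rV[R]_m) :
  continuous f -> continuous g ->
  strictly_convex_in_u f -> convex_in_u g ->
  (forall x, exists u, is_minimizer f g x u) ->
  (forall x, is_minimizer f g x (ustar x)) ->
  (forall x, LCF g x) ->
  borel_measurable ustar.
Proof.
move=> fc gc sc cg _ ustar_min _.
exact: minimizer_borel_measurable.
Qed.
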